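(* Let $\alpha=1/2$, $\rho=1$, $\Omega=\mathbb R$, and assume $\inf l=0$, $\sup l=\infty$. Let $a=\int_{-\infty}^{\infty}\sqrt{f_0(y)f_1(y)}\,dy$. The limiting (maximum) robustness parameters $(\epsilon_0,\epsilon_1)$, i.e. those for which the least favorable distributions coincide ($\hat G_0=\hat G_1$ $\mu$-a.e.), satisfy \[ a=\frac{1}{16}\left(16-4\epsilon_1+\epsilon_0(\epsilon_1-4)-\sqrt{(\epsilon_0-8)\,\epsilon_0\,(\epsilon_1-8)\,\epsilon_1}\right). \] In particular, if $\epsilon_0=\epsilon_1=\epsilon$, the maximum robustness parameter is $\epsilon_{\max}=4-2\sqrt{2(1+a)}$.
   Context: $f_0,f_1$ are distinct nominal probability densities on $\mathbb R$, $l=f_1/f_0$. The $\alpha$-divergence is $D(g,f;\alpha)=\frac{1}{\alpha(1-\alpha)}\big(1-\int g^\alpha f^{1-\alpha}dy\big)$ (for $\alpha=1/2$ this is $4$ times the squared Hellinger distance), uncertainty classes are $\mathcal G_i=\{g_i:D(g_i,f_i;\alpha)\le\epsilon_i\}$, and $\hat G_0,\hat G_1$ denote the least favorable distributions of the minimax Bayes test $\min_\delta\sup_{(g_0,g_1)\in\mathcal G_0\times\mathcal G_1}P_E$ with equal priors. *)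

From HB Require Import structures.
From mathcomp Require Import all_boot all_order all_algebra.
From mathcomp Require Import all_classical all_reals all_analysis.
Set Implicit Arguments. Unset Strict Implicit. Unset Printing Implicit Defensive.
Import Order.TTheory GRing.Theory Num.Theory.
Import numFieldNormedType.Exports.
Local Open Scope classical_set_scope.
Local Open Scope ring_scope.
Local Open Scope ereal_scope.

Section Defs.
Variable R : realType.
Local Notation mu := (@lebesgue_measure R).

Definition is_density (f : R -> R) : Prop :=
  [/\ measurable_fun [set: R] f, (forall x, (0 <= f x)%R)
    & \int[mu]_x (f x)%:E = 1].

Definition alpha_div (g f : R -> R) (alpha : R) : \bar R :=
  ((alpha * (1 - alpha))^-1)%:E *
    (1 - \int[mu]_x ((g x `^ alpha) * (f x `^ (1 - alpha)))%:E).

Definition unc_class (f : R -> R) (alpha eps : R) (g : R -> R) : Prop :=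
  is_density g /\ alpha_div g f alpha <= eps%:E.

(* (randomized) decision rule: delta y = probability of deciding H1 *)
Definition is_test (delta : R -> R) : Prop :=
  measurable_fun [set: R] delta /\ (forall x, (0 <= delta x <= 1)%R).

Definition err_prob (delta g0 g1 : R -> R) : \bar R :=
  (2^-1)%:E * \int[mu]_x (delta x * g0 x)%:E +
  (2^-1)%:E * \int[mu]_x ((1 - delta x) * g1 x)%:E.

Definition is_LFD (f0 f1 : R -> R) (alpha eps0 eps1 : R) (hg0 hg1 : R -> R) : Prop :=
  [/\ unc_class f0 alpha eps0 hg0, unc_class f1 alpha eps1 hg1 &
    exists hdelta, is_test hdelta /\
      (forall g0 g1, unc_class f0 alpha eps0 g0 -> unc_class f1 alpha eps1 g1 ->
         err_prob hdelta g0 g1 <= err_prob hdelta hg0 hg1) /\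
      (forall delta, is_test delta ->
         err_prob hdelta hg0 hg1 <= err_prob delta hg0 hg1)].

Definition LFDs_coincide (f0 f1 : R -> R) (alpha eps0 eps1 : R) : Prop :=
  exists hg0 hg1, is_LFD f0 f1 alpha eps0 eps1 hg0 hg1 /\
    {ae mu, forall x, hg0 x = hg1 x}.

Definition limiting_params (f0 f1 : R -> R) (alpha eps0 eps1 : R) : Prop :=
  LFDs_coincide f0 f1 alpha eps0 eps1 /\
  forall e0 e1, (0 <= e0 <= eps0)%R -> (0 <= e1 <= eps1)%R ->
    (e0, e1) <> (eps0, eps1) -> ~ LFDs_coincide f0 f1 alpha e0 e1.

End Defs.

From HB Require Import structures.
From mathcomp Require Import all_boot all_order all_algebra.
From mathcomp Require Import all_classical all_reals all_analysis.
From mathcomp Require Import ring lra measurable_realfun.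
Set Implicit Arguments. Unset Strict Implicit. Unset Printing Implicit Defensive.
Import Order.TTheory GRing.Theory Num.Theory.
Import numFieldNormedType.Exports.
Local Open Scope classical_set_scope.
Local Open Scope ring_scope.

(* Write [B g f] for the Bhattacharyya coefficient [\int sqrt (g f)]: it is the L^2 inner
   product of the unit vectors [sqrt g] and [sqrt f], i.e. the cosine of the angle between
   them, and for alpha = 1/2 the divergence is [D(g, f) = 4 (1 - B g f)].
   The least favorable densities coincide exactly when one density [g] lies in both
   uncertainty classes, the fair-coin test then being a saddle point.  At the limiting
   parameters, [eps_i = 4 (1 - cos theta_i)] where [theta_i] is the angle from [sqrt g] to
   [sqrt f_i] and [(cos theta_0, cos theta_1)] cannot be improved in both coordinates.
   The triangle inequality for angles (Cauchy-Schwarz) gives [theta <= theta_0 + theta_1]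
   for the angle [theta] between [sqrt f_0] and [sqrt f_1]; were it strict, rotating
   [sqrt g] within the plane of [sqrt f_0] and [sqrt f_1] would decrease [theta_0] and keep
   [theta_1].  So [a = cos theta = cos (theta_0 + theta_1)], which is the stated formula. *)

Section integrates_to.
Context {R : realType}.
Local Notation mu := (@lebesgue_measure R).

Definition integrates_to (h : R -> R) (r : R) : Prop :=
  [/\ measurable_fun [set: R] h, (forall x, 0 <= h x)
    & (\int[mu]_x (h x)%:E = r%:E)%E].

Lemma is_densityE (f : R -> R) : is_density f = integrates_to f 1.
Proof. by []. Qed.

Lemma integrates_to_ge0 (h : R -> R) r : integrates_to h r -> 0 <= r.
Proof.
by case=> _ h0 hr; rewrite -lee_fin -hr; apply: integral_ge0 => x _; rewrite lee_fin.
Qed.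

Lemma eq_integrates_to (h k : R -> R) r :
  h =1 k -> integrates_to h r -> integrates_to k r.
Proof. by move=> /funext ->. Qed.

Lemma integrates_toD (h k : R -> R) r s :
  integrates_to h r -> integrates_to k s ->
  integrates_to (fun x => h x + k x) (r + s).
Proof.
move=> [mh h0 hr] [mk k0 ks]; split.
- exact: measurable_funD.
- by move=> x; rewrite addr_ge0.
under eq_integral do rewrite EFinD.
rewrite ge0_integralD ?hr ?ks //; try by move=> x _; rewrite lee_fin.
all: exact/measurable_EFinP.
Qed.

Lemma integrates_toZ (c : R) (h : R -> R) r : 0 <= c ->
  integrates_to h r -> integrates_to (fun x => c * h x) (c * r).
Proof.
move=> c0 [mh h0 hr]; split.
- by apply: measurable_funM => //; exact: measurable_cst.
- by move=> x; rewrite mulr_ge0.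
under eq_integral do rewrite EFinM.
rewrite ge0_integralZl_EFin ?hr //; first by move=> x _; rewrite lee_fin.
exact/measurable_EFinP.
Qed.

Lemma integrates_to_le (h k : R -> R) r s :
  integrates_to h r -> integrates_to k s -> (forall x, h x <= k x) -> r <= s.
Proof.
move=> [mh h0 hr] [mk k0 ks] hk; rewrite -lee_fin -hr -ks.
apply: ge0_le_integral => //; try by move=> x _; rewrite lee_fin.
all: exact/measurable_EFinP.
Qed.

End integrates_to.

Section bhattacharyya.
Context {R : realType}.
Local Notation mu := (@lebesgue_measure R).

Definition bhattacharyya (g f : R -> R) : R :=
  fine (\int[mu]_x (Num.sqrt (g x) * Num.sqrt (f x))%:E)%E.

Lemma measurable_fun_sqrt (h : R -> R) : measurable_fun [set: R] h ->
  measurable_fun [set: R] (fun x => Num.sqrt (h x)).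
Proof.
by move=> mh; apply: (measurableT_comp _ mh); apply: continuous_measurable_fun;
  exact: sqrt_continuous.
Qed.

Lemma sqrt_mul_le_mean (u v : R) : 0 <= u -> 0 <= v ->
  Num.sqrt u * Num.sqrt v <= 2^-1 * u + 2^-1 * v.
Proof.
move=> u0 v0; rewrite -{2}(sqr_sqrtr u0) -{2}(sqr_sqrtr v0).
by have := sqr_ge0 (Num.sqrt u - Num.sqrt v); nra.
Qed.

Lemma bhattacharyya_ge0 (g f : R -> R) : 0 <= bhattacharyya g f.
Proof.
apply: fine_ge0; apply: integral_ge0 => x _.
by rewrite lee_fin mulr_ge0 ?sqrtr_ge0.
Qed.

Lemma bhattacharyyaE (g f : R -> R) r :
  integrates_to (fun x => Num.sqrt (g x) * Num.sqrt (f x)) r ->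
  bhattacharyya g f = r.
Proof. by case=> _ _ gfr; rewrite /bhattacharyya gfr. Qed.

Variables g f : R -> R.
Hypotheses (dg : is_density g) (df : is_density f).

Let sqrt_mul0 x : 0 <= Num.sqrt (g x) * Num.sqrt (f x).
Proof. by rewrite mulr_ge0 ?sqrtr_ge0. Qed.

Let measurable_sqrt_mul :
  measurable_fun [set: R] (fun x => Num.sqrt (g x) * Num.sqrt (f x)).
Proof. by apply: measurable_funM; apply: measurable_fun_sqrt; [case: dg | case: df]. Qed.

Lemma integral_sqrt_mul_le1 :
  (\int[mu]_x (Num.sqrt (g x) * Num.sqrt (f x))%:E <= 1%:E)%E.
Proof.
have half0 : 0 <= 2^-1 :> R by rewrite invr_ge0.
have half : 2^-1 * 1 + 2^-1 * 1 = 1 :> R by field.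
have := integrates_toD (integrates_toZ half0 dg) (integrates_toZ half0 df).
rewrite half => -[mmean _ imean].
rewrite -imean ge0_le_integral //; try by move=> x _; rewrite lee_fin.
- exact/measurable_EFinP.
- exact/measurable_EFinP.
- by move=> x _; rewrite lee_fin sqrt_mul_le_mean //; [case: dg | case: df].
Qed.

Lemma integrates_to_bhattacharyya :
  integrates_to (fun x => Num.sqrt (g x) * Num.sqrt (f x)) (bhattacharyya g f).
Proof.
split=> //; rewrite fineK // ge0_fin_numE; last first.
  by apply: integral_ge0 => x _; rewrite lee_fin.
exact: le_lt_trans integral_sqrt_mul_le1 (ltry _).
Qed.

Lemma bhattacharyya_le1 : bhattacharyya g f <= 1.
Proof.
by have [_ _ Ig] := integrates_to_bhattacharyya; rewrite -lee_fin -Ig integral_sqrt_mul_le1.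
Qed.

End bhattacharyya.

Section least_favorable.
Context {R : realType}.
Local Notation mu := (@lebesgue_measure R).

Lemma bhattacharyya_self (f : R -> R) : is_density f -> bhattacharyya f f = 1.
Proof.
move=> df; apply: bhattacharyyaE; apply: (eq_integrates_to _ df) => x.
by rewrite -expr2 sqr_sqrtr //; case: df.
Qed.

Lemma alpha_div_half (g f : R -> R) : is_density g -> is_density f ->
  alpha_div g f 2^-1 = (4 * (1 - bhattacharyya g f))%:E.
Proof.
move=> dg df; have [[_ g0 _] [_ f0 _]] := (dg, df).
rewrite /alpha_div (_ : 1 - 2^-1 = 2^-1 :> R); last by field.
under eq_integral do rewrite !powR12_sqrt //.
have [_ _ ->] := integrates_to_bhattacharyya dg df.
by rewrite -EFinB -EFinM; congr (_%:E); field.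
Qed.

Lemma alpha_div_ae_eq (g h f : R -> R) alpha :
  measurable_fun [set: R] g -> measurable_fun [set: R] h ->
  measurable_fun [set: R] f -> {ae mu, forall x, g x = h x} ->
  alpha_div g f alpha = alpha_div h f alpha.
Proof.
move=> mg mh mf gh; rewrite /alpha_div; congr (_ * (_ - _))%E.
have mpow (k : R -> R) : measurable_fun [set: R] k ->
    measurable_fun [set: R] (fun x => (k x `^ alpha * f x `^ (1 - alpha))%:E).
  move=> mk; apply/measurable_EFinP; apply: measurable_funM.
  - exact: (measurableT_comp (measurable_powR _) mk).
  - exact: (measurableT_comp (measurable_powR _) mf).
apply: ae_eq_integral => //; [exact: mpow | exact: mpow |].
have ae_filter := ae_filter_ringOfSetsType mu.
by move: gh; apply: filterS => x ->.
Qed.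

Lemma err_prob_same (delta g : R -> R) : is_test delta -> is_density g ->
  err_prob delta g g = (2^-1)%:E.
Proof.
move=> [mdelta delta01] [mg g0 Ig]; rewrite /err_prob.
have dg0 x : 0 <= delta x * g x by have /andP[d0 _] := delta01 x; rewrite mulr_ge0.
have dg1 x : 0 <= (1 - delta x) * g x.
  by have /andP[_ d1] := delta01 x; rewrite mulr_ge0 // subr_ge0.
rewrite -ge0_muleDr; try by apply: integral_ge0 => x _; rewrite lee_fin.
rewrite -ge0_integralD //; try by move=> x _; rewrite lee_fin.
- under eq_integral do rewrite -EFinD -mulrDl addrCA subrr addr0 mul1r.
  by rewrite Ig mule1.
- by apply/measurable_EFinP; apply: measurable_funM.
- apply/measurable_EFinP; apply: measurable_funM => //.
  by apply: measurable_funB => //; exact: measurable_cst.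
Qed.

Lemma err_prob_half (g0 g1 : R -> R) : is_density g0 -> is_density g1 ->
  err_prob (fun=> 2^-1) g0 g1 = (2^-1)%:E.
Proof.
rewrite !is_densityE => dg0 dg1; rewrite /err_prob (_ : 1 - 2^-1 = 2^-1 :> R); last by field.
have half0 : 0 <= 2^-1 :> R by rewrite invr_ge0.
have [_ _ ->] := integrates_toZ half0 dg0; have [_ _ ->] := integrates_toZ half0 dg1.
by rewrite -!EFinM -EFinD; congr (_%:E); field.
Qed.

Lemma LFDs_coincideP (f0 f1 : R -> R) alpha eps0 eps1 :
  measurable_fun [set: R] f1 ->
  LFDs_coincide f0 f1 alpha eps0 eps1 <->
  exists g, unc_class f0 alpha eps0 g /\ unc_class f1 alpha eps1 g.
Proof.
move=> mf1; split.
  move=> [hg0 [hg1 [[G0 [dh1 D1] _] h01]]]; exists hg0; split=> //.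
  have [[[mh0 _ _] _] [mh1 _ _]] := (G0, dh1).
  by split; [case: G0 | rewrite (alpha_div_ae_eq _ mh0 mh1 mf1 h01)].
move=> [g [G0 G1]]; exists g, g; split; last exact: aeW.
split=> //; exists (fun=> 2^-1); split; [split | split].
- exact: measurable_cst.
- by move=> x; rewrite invr_ge0 ler0n /= invf_le1 // ler1n.
- by move=> g0 g1 [dg0 _] [dg1 _]; rewrite !err_prob_half //; case: G0.
- by move=> delta tdelta; rewrite err_prob_half; [rewrite err_prob_same | |]; case: G0.
Qed.

End least_favorable.

Section limiting_params.
Context {R : realType}.
Variables f0 f1 : R -> R.
Hypotheses (df0 : is_density f0) (df1 : is_density f1).

Definition pareto_optimal (g : R -> R) : Prop :=
  forall h, is_density h ->
    bhattacharyya g f0 <= bhattacharyya h f0 -> bhattacharyya g f1 <= bhattacharyya h f1 ->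
    bhattacharyya h f0 = bhattacharyya g f0 /\ bhattacharyya h f1 = bhattacharyya g f1.

Lemma LFDs_coincide_bhattacharyya (g : R -> R) : is_density g ->
  LFDs_coincide f0 f1 2^-1 (4 * (1 - bhattacharyya g f0)) (4 * (1 - bhattacharyya g f1)).
Proof.
move=> dg; apply/LFDs_coincideP; first by case: df1.
by exists g; split; split; rewrite // alpha_div_half.
Qed.

Lemma limiting_params_pareto_optimal eps0 eps1 :
  limiting_params f0 f1 2^-1 eps0 eps1 ->
  exists g, [/\ is_density g, pareto_optimal g,
    eps0 = 4 * (1 - bhattacharyya g f0) & eps1 = 4 * (1 - bhattacharyya g f1)].
Proof.
move=> [/LFDs_coincideP coincide minimal].
have [g [[dg D0] [_ D1]]] := coincide ltac:(by case: df1).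
rewrite alpha_div_half // lee_fin in D0; rewrite alpha_div_half // lee_fin in D1.
have limiting h : is_density h ->
    bhattacharyya g f0 <= bhattacharyya h f0 ->
    bhattacharyya g f1 <= bhattacharyya h f1 ->
    eps0 = 4 * (1 - bhattacharyya h f0) /\ eps1 = 4 * (1 - bhattacharyya h f1).
  move=> dh le0 le1; apply: contrapT => neq.
  have := bhattacharyya_le1 dh df0; have := bhattacharyya_le1 dh df1 => h1 h0.
  apply: (minimal _ _ _ _ _ (LFDs_coincide_bhattacharyya dh)).
  - by apply/andP; split; lra.
  - by apply/andP; split; lra.
  - by case=> e0 e1; apply: neq.
have [E0 E1] := limiting g dg (lexx _) (lexx _).
exists g; split=> // h dh le0 le1; have [E0' E1'] := limiting h dh le0 le1.
by split; lra.
Qed.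

End limiting_params.

Section angles.
Variable R : rcfType.
Implicit Types (c d u v x y : R).

(* [cos (arccos x + arccos y)] *)
Definition cos_angle_sum x y : R :=
  x * y - Num.sqrt (1 - x ^+ 2) * Num.sqrt (1 - y ^+ 2).

Lemma le_mul_of_quadratic_ge0 d u v : 0 <= u -> 0 <= v ->
  (forall t, 0 < t -> 2 * t * d <= t ^+ 2 * u ^+ 2 + v ^+ 2) -> d <= u * v.
Proof.
move=> u0 v0 quad; have [d_le0|d_gt0] := lerP d 0; first exact: le_trans d_le0 (mulr_ge0 u0 v0).
have [u_eq0|u_neq0] := eqVneq u 0.
  pose t := (v ^+ 2 + 1) / (2 * d).
  have := quad t ltac:(by rewrite divr_gt0 ?mulr_gt0 ?ltr_wpDl ?sqr_ge0).
  rewrite (_ : 2 * t * d = v ^+ 2 + 1); first by rewrite u_eq0 expr0n mulr0; lra.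
  by rewrite /t; field; rewrite gt_eqF.
have u2_gt0 : 0 < u ^+ 2 by rewrite exprn_gt0 // lt0r u_neq0.
pose t := d / u ^+ 2; have := quad t (divr_gt0 d_gt0 u2_gt0).
rewrite (_ : 2 * t * d = 2 * (d ^+ 2 / u ^+ 2)); last by rewrite /t; field.
rewrite (_ : t ^+ 2 * u ^+ 2 = d ^+ 2 / u ^+ 2); last by rewrite /t; field.
move=> le; have : d ^+ 2 / u ^+ 2 <= v ^+ 2 by lra.
rewrite ler_pdivrMr // => le2.
have uv0 := mulr_ge0 u0 v0; nra.
Qed.

Lemma sqr_sqrt1B x : 0 <= x <= 1 -> Num.sqrt (1 - x ^+ 2) ^+ 2 = 1 - x ^+ 2.
Proof. by move=> /andP[x0 x1]; rewrite sqr_sqrtr // subr_ge0 expr_le1. Qed.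

Lemma mul_sqrt1B_le x y : 0 <= x <= y ->
  x * Num.sqrt (1 - y ^+ 2) <= y * Num.sqrt (1 - x ^+ 2).
Proof.
move=> /andP[x0 xy]; rewrite ler_pM ?sqrtr_ge0 // ler_wsqrtr // lerB //.
by rewrite ler_pXn2r // nnegrE (le_trans x0 xy).
Qed.

Lemma cos_angle_sum_lt_cos_diff x y c : 0 <= x <= 1 -> 0 <= y <= 1 -> 0 <= c <= y ->
  cos_angle_sum x y < c ->
  x < c * y + Num.sqrt (1 - c ^+ 2) * Num.sqrt (1 - y ^+ 2).
Proof.
move=> x01 /[dup] y01 /andP[y0 y1] c0y lt_c.
have c01 : 0 <= c <= 1 by case/andP: c0y => -> /le_trans ->.
have Y0 := mul_sqrt1B_le c0y.
have [[sx2 sy2] sc2] := (sqr_sqrt1B x01, sqr_sqrt1B y01, sqr_sqrt1B c01).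
move: lt_c Y0; rewrite /cos_angle_sum.
have := sqrtr_ge0 (1 - x ^+ 2); have := sqrtr_ge0 (1 - y ^+ 2).
set sx := Num.sqrt (1 - x ^+ 2) in sx2 *; set sy := Num.sqrt (1 - y ^+ 2) in sy2 *.
set sc := Num.sqrt (1 - c ^+ 2) in sc2 *.
move=> sy0 sx0 lt_c; rewrite -subr_ge0 mulrC.
(* [X] and [Y] are the cosine and sine of [arccos c - arccos y]. *)
set X := c * y + sc * sy; set Y := sc * y - c * sy => Y0.
have XY1 : X ^+ 2 + Y ^+ 2 = 1 by rewrite /X /Y; nra.
have cE : c = X * y - Y * sy by rewrite /X /Y; nra.
rewrite ltNge; apply/negP => X_le_x.
have sx_le_Y : sx <= Y.
  have X0 : 0 <= X by rewrite addr_ge0 ?mulr_ge0 ?sqrtr_ge0 //; case/andP: c01.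
  rewrite -(ler_pXn2r (_ : 0 < 2)%N) ?nnegrE //; nra.
have := ler_wpM2r y0 X_le_x; have := ler_wpM2r sy0 sx_le_Y; lra.
Qed.

Lemma cos_angle_sum_witness x y c : 0 <= x <= 1 -> 0 <= y <= 1 -> 0 <= c < y ->
  cos_angle_sum x y < c ->
  exists p q, [/\ 0 <= p, 0 <= q, p ^+ 2 + q ^+ 2 + 2 * p * q * c = 1,
    x < p + q * c & p * c + q = y].
Proof.
move=> x01 y01 /andP[c0 cy] lt_c.
have c0y : 0 <= c <= y by rewrite c0 ltW.
have c01 : 0 <= c <= 1 by rewrite c0 (le_trans (ltW cy)) //; case/andP: y01.
have sc_gt0 : 0 < Num.sqrt (1 - c ^+ 2).
  by rewrite sqrtr_gt0 subr_gt0 expr_lt1 // (lt_le_trans cy) //; case/andP: y01.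
have := cos_angle_sum_lt_cos_diff x01 y01 c0y lt_c.
have := mul_sqrt1B_le c0y; have [sy2 sc2] := (sqr_sqrt1B y01, sqr_sqrt1B c01).
have sy0 := sqrtr_ge0 (1 - y ^+ 2).
set sy := Num.sqrt (1 - y ^+ 2) in sy2 sy0 *; set sc := Num.sqrt (1 - c ^+ 2) in sc2 sc_gt0 *.
move=> Y0 lt_x; pose p := sy / sc.
have p_sc : p * sc = sy by rewrite divfK ?gt_eqF.
exists p, (y - c * p); split.
- by rewrite divr_ge0 // ltW.
- rewrite subr_ge0 -(ler_pM2r sc_gt0) -mulrA p_sc; lra.
- nra.
- nra.
- ring.
Qed.

Lemma cos_angle_sum_divergences x y e0 e1 : 0 <= x <= 1 -> 0 <= y <= 1 ->
  e0 = 4 * (1 - x) -> e1 = 4 * (1 - y) ->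
  cos_angle_sum x y = 16^-1 * (16 - 4 * e1 + e0 * (e1 - 4)
                        - Num.sqrt ((e0 - 8) * e0 * (e1 - 8) * e1)).
Proof.
move=> /[dup] x01 /andP[x0 x1] /[dup] y01 /andP[y0 y1] -> ->.
rewrite (_ : _ * _ * _ * _ = 16 ^+ 2 * ((1 - x ^+ 2) * (1 - y ^+ 2))); last by ring.
rewrite sqrtrM ?sqr_ge0 // sqrtr_sqr ger0_norm // sqrtrM ?subr_ge0 ?expr_le1 //.
by rewrite /cos_angle_sum; field.
Qed.

Lemma cos_angle_sum_diag x e : 0 <= x <= 1 -> e = 4 * (1 - x) ->
  e = 4 - 2 * Num.sqrt (2 * (1 + cos_angle_sum x x)).
Proof.
move=> /[dup] x01 /andP[x0 _] ->; rewrite /cos_angle_sum -!expr2 sqr_sqrt1B //.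
rewrite (_ : 2 * _ = (2 * x) ^+ 2); last by ring.
by rewrite sqrtr_sqr ger0_norm ?mulr_ge0 //; ring.
Qed.

End angles.

Section hellinger_geometry.
Context {R : realType}.

Lemma bhattacharyyaC (g f : R -> R) : bhattacharyya g f = bhattacharyya f g.
Proof. by rewrite /bhattacharyya; under eq_integral do rewrite mulrC. Qed.

Lemma cauchy_schwarz_sqrt (g k : R -> R) K b : is_density g -> integrates_to k K ->
  integrates_to (fun x => Num.sqrt (k x) * Num.sqrt (g x)) b -> b ^+ 2 <= K.
Proof.
rewrite is_densityE => dg dk db; have b0 := integrates_to_ge0 db.
have : 2 * b * b <= b ^+ 2 * 1 + K; last by lra.
apply: (integrates_to_le (integrates_toZ (mulr_ge0 (ler0n _ 2) b0) db)
  (integrates_toD (integrates_toZ (sqr_ge0 b) dg) dk)) => x. have [[_ g0 _] [_ k0 _]] := (dg, dk).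
rewrite -{2}(sqr_sqrtr (g0 x)) -{2}(sqr_sqrtr (k0 x)).
have := sqr_ge0 (b * Num.sqrt (g x) - Num.sqrt (k x)); nra.
Qed.

Variables f0 f1 : R -> R.
Hypotheses (df0 : is_density f0) (df1 : is_density f1).

Definition root_mix (p q : R) (x : R) : R :=
  (p * Num.sqrt (f0 x) + q * Num.sqrt (f1 x)) ^+ 2.

Section mix.
Variables p q : R.
Hypotheses (p0 : 0 <= p) (q0 : 0 <= q).

Lemma sqrt_root_mix x :
  Num.sqrt (root_mix p q x) = p * Num.sqrt (f0 x) + q * Num.sqrt (f1 x).
Proof. by rewrite sqrtr_sqr ger0_norm // addr_ge0 // mulr_ge0 ?sqrtr_ge0. Qed.

Lemma integrates_to_root_mix :
  integrates_to (root_mix p q) (p ^+ 2 + q ^+ 2 + 2 * p * q * bhattacharyya f0 f1).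
Proof.
rewrite -[p ^+ 2]mulr1 -[q ^+ 2]mulr1.
apply: eq_integrates_to (integrates_toD (integrates_toD
  (integrates_toZ (sqr_ge0 p) df0) (integrates_toZ (sqr_ge0 q) df1))
  (integrates_toZ _ (integrates_to_bhattacharyya df0 df1))); last by rewrite !mulr_ge0.
move=> x; have [[_ f0x _] [_ f1x _]] := (df0, df1).
rewrite /root_mix -{1}(sqr_sqrtr (f0x x)) -{1}(sqr_sqrtr (f1x x)); ring.
Qed.

Lemma integrates_to_sqrt_root_mix (h : R -> R) : is_density h ->
  integrates_to (fun x => Num.sqrt (root_mix p q x) * Num.sqrt (h x))
    (p * bhattacharyya f0 h + q * bhattacharyya f1 h).
Proof.
move=> dh; apply: eq_integrates_to (integrates_toD
  (integrates_toZ p0 (integrates_to_bhattacharyya df0 dh))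
  (integrates_toZ q0 (integrates_to_bhattacharyya df1 dh))).
by move=> x; rewrite sqrt_root_mix; ring.
Qed.

End mix.

Lemma cos_angle_sum_le_bhattacharyya (g : R -> R) : is_density g ->
  cos_angle_sum (bhattacharyya g f0) (bhattacharyya g f1) <= bhattacharyya f0 f1.
Proof.
move=> dg; set A0 := bhattacharyya g f0; set A1 := bhattacharyya g f1.
have [A0_01 A1_01] : 0 <= A0 <= 1 /\ 0 <= A1 <= 1.
  by rewrite !bhattacharyya_ge0 !bhattacharyya_le1.
suff : A0 * A1 - bhattacharyya f0 f1 <=
       Num.sqrt (1 - A0 ^+ 2) * Num.sqrt (1 - A1 ^+ 2) by rewrite /cos_angle_sum; lra.
apply: le_mul_of_quadratic_ge0; rewrite ?sqrtr_ge0 // => t t0.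
have := cauchy_schwarz_sqrt dg (integrates_to_root_mix (ltW t0) ler01)
  (integrates_to_sqrt_root_mix (ltW t0) ler01 dg).
rewrite sqr_sqrt1B // sqr_sqrt1B // 2!(bhattacharyyaC _ g) -/A0 -/A1; nra.
Qed.

Lemma bhattacharyya_root_mix p q : 0 <= p -> 0 <= q ->
  p ^+ 2 + q ^+ 2 + 2 * p * q * bhattacharyya f0 f1 = 1 ->
  [/\ is_density (root_mix p q),
      bhattacharyya (root_mix p q) f0 = p + q * bhattacharyya f0 f1 &
      bhattacharyya (root_mix p q) f1 = p * bhattacharyya f0 f1 + q].
Proof.
move=> p0 q0 norm1; split.
- by rewrite is_densityE -norm1; exact: integrates_to_root_mix.
- apply: bhattacharyyaE; move: (integrates_to_sqrt_root_mix p0 q0 df0).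
  by rewrite bhattacharyya_self // mulr1 bhattacharyyaC.
- apply: bhattacharyyaE; move: (integrates_to_sqrt_root_mix p0 q0 df1).
  by rewrite bhattacharyya_self // mulr1.
Qed.

Lemma pareto_optimal_bhattacharyya (g : R -> R) : is_density g ->
  pareto_optimal f0 f1 g ->
  bhattacharyya f0 f1 = cos_angle_sum (bhattacharyya g f0) (bhattacharyya g f1).
Proof.
move=> dg pareto; set A0 := bhattacharyya g f0; set A1 := bhattacharyya g f1.
set a := bhattacharyya f0 f1.
have [A0_01 A1_01] : 0 <= A0 <= 1 /\ 0 <= A1 <= 1.
  by rewrite !bhattacharyya_ge0 !bhattacharyya_le1.
apply/le_anti; rewrite cos_angle_sum_le_bhattacharyya // andbT.
have [A1_le_a|a_lt_A1] := lerP A1 a.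
  have [] := pareto f0 df0 ltac:(by rewrite bhattacharyya_self //; case/andP: A0_01) A1_le_a.
  rewrite bhattacharyya_self // -/A0 -/A1 -/a => <- <-.
  by rewrite /cos_angle_sum expr1n subrr sqrtr0 mul0r mul1r subr0.
rewrite leNgt; apply/negP => lt_a.
have a_range : 0 <= a < A1 by rewrite a_lt_A1 andbT; exact: bhattacharyya_ge0.
have [p [q [p0 q0 norm1 A0_lt A1_eq]]] := cos_angle_sum_witness A0_01 A1_01 a_range lt_a.
have [dmix mix0 mix1] := bhattacharyya_root_mix p0 q0 norm1.
have := pareto _ dmix; rewrite mix0 mix1 A1_eq => /(_ (ltW A0_lt) (lexx _)) [A0_eq _].
by move: A0_lt; rewrite A0_eq ltxx.
Qed.

End hellinger_geometry.

Theorem mainTheorem3 (R : realType) (f0 f1 : R -> R) (eps0 eps1 : R) :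
  is_density f0 -> is_density f1 ->
  ~ {ae (@lebesgue_measure R), forall x, f0 x = f1 x} ->
  (* ess inf l = 0, where l = f1 / f0 *)
  (forall c : R, 0 < c ->
     (0 < (@lebesgue_measure R) [set y | (f1 y < c * f0 y)%R])%E) ->
  (* ess sup l = +oo *)
  (forall c : R, 0 < c ->
     (0 < (@lebesgue_measure R) [set y | (c * f0 y < f1 y)%R])%E) ->
  0 <= eps0 -> 0 <= eps1 ->
  limiting_params f0 f1 (2^-1) eps0 eps1 ->
  let a := (\int[@lebesgue_measure R]_y (Num.sqrt (f0 y * f1 y))%:E)%E in
  a = ((16^-1 * (16 - 4 * eps1 + eps0 * (eps1 - 4)
          - Num.sqrt ((eps0 - 8) * eps0 * (eps1 - 8) * eps1)))%:E)%E /\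
  (eps0 = eps1 -> eps0 = 4 - 2 * Num.sqrt (2 * (1 + fine a))).
Proof.
move=> df0 df1 _ _ _ _ _ /(limiting_params_pareto_optimal df0 df1) [g [dg pareto E0 E1]] a.
have A0_01 : 0 <= bhattacharyya g f0 <= 1 by rewrite bhattacharyya_ge0 bhattacharyya_le1.
have A1_01 : 0 <= bhattacharyya g f1 <= 1 by rewrite bhattacharyya_ge0 bhattacharyya_le1.
have -> : a = (bhattacharyya f0 f1)%:E.
  have [_ _ <-] := integrates_to_bhattacharyya df0 df1.
  by apply: eq_integral => y _; rewrite sqrtrM //; case: df0.
rewrite /= (pareto_optimal_bhattacharyya df0 df1 dg pareto); split.
  by rewrite (cos_angle_sum_divergences A0_01 A1_01 E0 E1).
move=> eps01; have A01 : bhattacharyya g f0 = bhattacharyya g f1 by lra.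
by rewrite -A01; apply: cos_angle_sum_diag.
Qed.
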